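(* Let $\gamma\in(0,1)$ and $\alpha_n=\gamma/(1+n\gamma)$ for $n\ge0$. Then for nonnegative integers $n,m$, \[ \mu_{n,m}=\begin{cases}\delta_{n,m}&\text{if } n\le m,\\ \dfrac{\gamma}{1+m\gamma}&\text{if } n>m.\end{cases} \]
   Context: For a polynomial $f(z)=\sum_{k=0}^n a_kz^k$ of degree $n$, write $\overline{f}(z)=\sum_k\overline{a_k}z^k$ and $f^*(z)=z^n\overline{f}(1/z)$. Given $(\alpha_n)$ with $|\alpha_n|<1$, define monic $\Phi_n$ by $\Phi_0=1$, $\Phi_{n+1}(z)=z\Phi_n(z)-\overline{\alpha_n}\Phi_n^*(z)$. Let $\mathcal{L}$ be the unique linear functional on Laurent polynomials with $\mathcal{L}(1)=1$ and $\mathcal{L}(\Phi_m(z)\overline{\Phi_n}(1/z))=0$ for $m\neq n$; set $\langle f,g\rangle=\mathcal{L}(f(z)\overline{g}(1/z))$ and $\mu_{n,m}=\langle\Phi_m(z),z^n\rangle/\langle\Phi_m,\Phi_m\rangle$. *)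

From HB Require Import structures.
From mathcomp Require Import all_boot all_order all_algebra.
From mathcomp Require Import complex.
Set Implicit Arguments. Unset Strict Implicit. Unset Printing Implicit Defensive.
Import Order.TTheory GRing.Theory Num.Theory.
Local Open Scope ring_scope.

Section OPUC.
Variable R : rcfType.
Local Notation C := R[i].

Definition conjp (p : {poly C}) : {poly C} := map_poly (fun x => x^*) p.

(* reversed polynomial f^*(z) = z^n \overline{f}(1/z), n = deg f *)
Definition revstar (p : {poly C}) : {poly C} :=
  \poly_(i < size p) (p`_((size p).-1 - i))^*.

Fixpoint Phi (a : nat -> C) (n : nat) : {poly C} :=
  match n with
  | 0 => 1
  | n'.+1 => 'X * Phi a n' - (a n')^* *: revstar (Phi a n')
  end.

(* A linear functional L on Laurent polynomials is determined by (and
   represented by) its moments c k = L(z^k), k : int.  Then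
   <f, g> = L(f(z) \overline{g}(1/z)) = sum_{i,j} f_i conj(g_j) c (i - j). *)
Definition lpair (c : int -> C) (f g : {poly C}) : C :=
  \sum_(i < size f) \sum_(j < size g) f`_i * (g`_j)^* * c (i%:Z - j%:Z).

Definition mu (a : nat -> C) (c : int -> C) (n m : nat) : C :=
  lpair c (Phi a m) ('X^n) / lpair c (Phi a m) (Phi a m).

End OPUC.

From HB Require Import structures.
From mathcomp Require Import all_boot all_order all_algebra.
From mathcomp Require Import complex.
From mathcomp Require Import ring.
Set Implicit Arguments. Unset Strict Implicit. Unset Printing Implicit Defensive.
Import Order.TTheory GRing.Theory Num.Theory.
Local Open Scope ring_scope.

(* For alpha_n = gamma / (1 + n gamma) one has alpha_(n-1) (1 - alpha_n) = alpha_n,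
   and Szego's recursion then gives the closed form
   Phi_n = z^n - alpha_(n-1) (1 + z + ... + z^(n-1)).
   Orthogonality of Phi_n to Phi_0 = 1, on either side, determines the moments
   L(z^k) inductively: since alpha_(n-1) (1 + (n-1) gamma) = gamma, they all equal
   gamma for k <> 0.  With these moments <Phi_m, z^n> is an explicit finite sum,
   which vanishes for n < m and equals alpha_m <Phi_m, z^m> for n > m; as Phi_m is
   monic, the vanishing also gives <Phi_m, Phi_m> = <Phi_m, z^m>. *)

Section ClosedForm.
Variable R : rcfType.
Local Notation C := R[i].

Lemma coef_revstar (p : {poly C}) j :
  (revstar p)`_j = if (j < size p)%N then (p`_((size p).-1 - j))^* else 0.
Proof. exact: coef_poly. Qed.

(* For [n = 0] the sum is empty, so the junk index [0.-1] is harmless. *)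
Definition Phi_geom (a : nat -> C) (n : nat) : {poly C} :=
  'X^n - a n.-1 *: \poly_(i < n) 1.

Variable a : nat -> C.

Lemma coef_Phi_geom n j :
  (Phi_geom a n)`_j = (j == n)%:R - (j < n)%:R * a n.-1.
Proof. by rewrite coefB coefXn coefZ coef_poly mulrC; case: ltnP. Qed.

Lemma size_Phi_geom n : size (Phi_geom a n) = n.+1.
Proof.
rewrite size_polyDl size_polyXn // size_polyN ltnS.
by rewrite (leq_trans (size_scale_leq _ _)) ?size_poly.
Qed.

Lemma sum_coef_Phi_geom N (d : nat -> C) :
  \sum_(i < N.+1) (Phi_geom a N)`_i * d i = d N - a N.-1 * \sum_(i < N) d i.
Proof.
rewrite big_ord_recr /= coef_Phi_geom eqxx ltnn mul0r subr0 mul1r addrC.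
rewrite mulr_sumr -sumrN; congr (_ + _); apply: eq_bigr => i _.
by rewrite coef_Phi_geom (ltn_eqF (ltn_ord i)) ltn_ord sub0r mul1r mulNr.
Qed.

Lemma revstar_Phi_geom n :
  revstar (Phi_geom a n) = 1 - (a n.-1)^* *: ('X * \poly_(i < n) 1).
Proof.
apply/polyP => j; rewrite coef_revstar size_Phi_geom coef_Phi_geom.
rewrite coefB coef1 coefZ coefXM coef_poly /=.
case: j => [|j] /=; first by rewrite subn0 eqxx ltnn mul0r mulr0 !subr0 conjC_nat.
rewrite ltnS sub0r; case: ltnP => [jn|nj]; last by rewrite mulr0 oppr0.
have lt_n : (n - j.+1 < n)%N by rewrite ltn_subrL (leq_ltn_trans (leq0n j) jn).
by rewrite (ltn_eqF lt_n) lt_n mul1r sub0r mulr1 rmorphN.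
Qed.

Hypothesis a_real : forall k, (a k)^* = a k.
Hypothesis a_rec : forall k, a k * (1 - a k.+1) = a k.+1.

Lemma Phi_geomS n :
  'X * Phi_geom a n - (a n)^* *: revstar (Phi_geom a n) = Phi_geom a n.+1.
Proof.
apply/polyP => j; rewrite revstar_Phi_geom !coef_Phi_geom.
rewrite coefB coefZ coefB coef1 coefZ !coefXM coef_Phi_geom coef_poly !a_real.
case: j => [|j] /=; first by rewrite !mulr0 subr0 mulr1 mul1r.
rewrite eqSS ltnS sub0r; case: ltnP => [jn|nj] /=; last by ring.
case: n jn => [//|n] jn /=.
by rewrite (ltn_eqF jn) /= -[in RHS](a_rec n); ring.
Qed.

Lemma Phi_closed n : Phi a n = Phi_geom a n.
Proof.
elim: n => [|n IH]; last by rewrite /= IH Phi_geomS.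
by apply/polyP => j; rewrite /= coef1 coef_Phi_geom ltn0 mul0r subr0.
Qed.

End ClosedForm.

Section Lpair.
Variables (R : rcfType) (c : int -> R[i]).

Lemma lpair_polyXn f n :
  lpair c f 'X^n = \sum_(i < size f) f`_i * c (i%:Z - n%:Z).
Proof.
apply: eq_bigr => i _; rewrite size_polyXn big_ord_recr /= coefXn eqxx conjC1 mulr1.
rewrite big1 ?add0r // => j _.
by rewrite coefXn (ltn_eqF (ltn_ord j)) conjC0 mulr0 mul0r.
Qed.

Lemma lpair_1l g : lpair c 1 g = \sum_(j < size g) (g`_j)^* * c (- j%:Z).
Proof.
rewrite /lpair size_polyC oner_eq0 big_ord1.
by apply: eq_bigr => j _; rewrite coefC /= mul1r sub0r.
Qed.

Lemma lpair_expandr f g :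
  lpair c f g = \sum_(j < size g) (g`_j)^* * lpair c f 'X^j.
Proof.
under [RHS]eq_bigr => j _ do rewrite lpair_polyXn mulr_sumr.
rewrite /lpair exchange_big /=; apply: eq_bigr => j _.
by apply: eq_bigr => i _; rewrite mulrCA mulrA.
Qed.

End Lpair.

Section GeometricVerblunsky.
Variables (R : rcfType) (G : R[i]) (a : nat -> R[i]) (c : int -> R[i]).
Hypothesis G_real : G^* = G.
Hypothesis den_neq0 : forall k : nat, 1 + k%:R * G != 0.
Hypothesis G_neq1 : 1 - G != 0.
Hypothesis aE : forall k, a k = G / (1 + k%:R * G).
Hypothesis c0 : c 0 = 1.
Hypothesis Phi_orth : forall m n : nat, m <> n -> lpair c (Phi a m) (Phi a n) = 0.

Lemma a_real k : (a k)^* = a k.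
Proof.
rewrite aE fmorph_div rmorphD rmorphM rmorph1 rmorph_nat.
by congr (_ / (1 + _ * _)); exact: G_real.
Qed.

Lemma a_rec k : a k * (1 - a k.+1) = a k.+1.
Proof. by rewrite !aE -natr1; field; rewrite natr1 !den_neq0. Qed.

Lemma a_mul_den k : a k * (1 + k%:R * G) = G.
Proof. by rewrite aE divfK. Qed.

Let PhiE n : Phi a n = Phi_geom a n := Phi_closed a_real a_rec n.

Lemma moments_of_orth (d : nat -> R[i]) : d 0%N = 1 ->
    (forall N, \sum_(i < N.+2) (Phi_geom a N.+1)`_i * d i = 0) ->
  forall k, d k.+1 = G.
Proof.
move=> d0 orth; elim/ltn_ind => k IH.
have /eqP := orth k; rewrite sum_coef_Phi_geom subr_eq0 => /eqP ->.
rewrite big_ord_recl d0 -[RHS](a_mul_den k); congr (_ * (1 + _)).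
under eq_bigr => i _ do rewrite IH ?ltn_ord //.
by rewrite sumr_const card_ord mulr_natl.
Qed.

Lemma momentE k : c k = if k == 0 then 1 else G.
Proof.
have c_pos n : c n.+1 = G.
  apply: (moments_of_orth (d := fun i : nat => c i)) => // N.
  have : lpair c (Phi a N.+1) (Phi a 0) = 0 by exact: Phi_orth.
  rewrite [Phi a 0]/= -(expr0 'X) PhiE lpair_polyXn size_Phi_geom.
  by under eq_bigr do rewrite subr0.
have c_neg n : c (- n.+1%:Z) = G.
  apply: (moments_of_orth (d := fun i : nat => c (- i%:Z))) => // N.
  have : lpair c (Phi a 0) (Phi a N.+1) = 0 by exact: Phi_orth.
  rewrite [Phi a 0]/= PhiE lpair_1l size_Phi_geom.
  by under eq_bigr do
    rewrite coef_Phi_geom rmorphB rmorphM !rmorph_nat /= a_real -coef_Phi_geom.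
by case: k => [[|n]|n] //=; rewrite NegzE.
Qed.

Lemma sum_moments m n :
  \sum_(i < m) c (i%:Z - n%:Z) = m%:R * G + (n < m)%:R * (1 - G).
Proof.
elim: m => [|m IH]; first by rewrite big_ord0 ltn0 !mul0r addr0.
rewrite big_ord_recr /= IH momentE subr_eq0 eqz_nat ltnS.
by case: ltngtP => _ /=; rewrite -natr1; ring.
Qed.

Lemma lpair_Phi_Xn m n : lpair c (Phi a m) 'X^n =
  (if m == n then 1 else G) - a m.-1 * (m%:R * G + (n < m)%:R * (1 - G)).
Proof.
rewrite PhiE lpair_polyXn size_Phi_geom (sum_coef_Phi_geom _ _ (fun i => c (i%:Z - n%:Z))).
by rewrite momentE subr_eq0 eqz_nat sum_moments.
Qed.

Lemma lpair_Phi_Xn_lt m n : (n < m)%N -> lpair c (Phi a m) 'X^n = 0.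
Proof.
case: m => // m lt_nm; rewrite lpair_Phi_Xn (gtn_eqF lt_nm) lt_nm /=.
by rewrite -natr1 -[G in G - _](a_mul_den m); ring.
Qed.

Lemma lpair_Phi_Xn_gt m n :
  (m < n)%N -> lpair c (Phi a m) 'X^n = a m * lpair c (Phi a m) 'X^m.
Proof.
move=> lt_mn; rewrite !lpair_Phi_Xn (ltn_eqF lt_mn) ltnNge (ltnW lt_mn) eqxx ltnn /=.
by case: m lt_mn => [|m] _ /=; rewrite !aE -?natr1; field; rewrite ?natr1 ?den_neq0.
Qed.

Lemma lpair_Phi_Xm_neq0 m : lpair c (Phi a m) 'X^m != 0.
Proof.
rewrite lpair_Phi_Xn eqxx ltnn mul0r addr0.
case: m => [|m]; first by rewrite mul0r mulr0 subr0 oner_eq0.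
have -> : 1 - a m * (m.+1%:R * G) = (1 - G) * (1 + m.+1%:R * G) / (1 + m%:R * G).
  by rewrite aE -natr1; field.
by rewrite !mulf_neq0 ?invr_eq0.
Qed.

Lemma lpair_Phi_norm m : lpair c (Phi a m) (Phi a m) = lpair c (Phi a m) 'X^m.
Proof.
rewrite {2}PhiE lpair_expandr size_Phi_geom big_ord_recr /= big1 ?add0r => [|i _].
  by rewrite coef_Phi_geom eqxx ltnn mul0r subr0 conjC_nat mul1r.
by rewrite lpair_Phi_Xn_lt ?mulr0.
Qed.

Lemma mu_geom n m : mu a c n m = if (n <= m)%N then (n == m)%:R else a m.
Proof.
rewrite /mu lpair_Phi_norm; case: ltngtP => [lt_nm|lt_mn|->].
- by rewrite lpair_Phi_Xn_lt ?mul0r.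
- by rewrite lpair_Phi_Xn_gt ?mulfK ?lpair_Phi_Xm_neq0.
- by rewrite divff ?lpair_Phi_Xm_neq0.
Qed.

End GeometricVerblunsky.

Theorem proposition4p5 (R : rcfType) (gamma : R) (c : int -> R[i]) :
  0 < gamma < 1 ->
  let alpha := fun n : nat => ((gamma / (1 + n%:R * gamma))%:C)%C in
  c 0 = 1 ->
  (forall m n : nat, m <> n -> lpair c (Phi alpha m) (Phi alpha n) = 0) ->
  forall n m : nat,
    mu alpha c n m =
      if (n <= m)%N then (n == m)%:R
      else ((gamma / (1 + m%:R * gamma))%:C)%C.
Proof.
move=> /andP[gamma_gt0 gamma_lt1] alpha c0 Phi_orth n m.
have denE k : 1 + k%:R * (gamma%:C)%C = ((1 + k%:R * gamma)%:C)%C.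
  by rewrite rmorphD rmorph1 rmorphM rmorph_nat.
have den_neq0 k : 1 + k%:R * (gamma%:C)%C != 0.
  by rewrite denE fmorph_eq0 gt_eqF // ltr_wpDr ?mulr_ge0 ?ler0n ?ltW.
have G_neq1 : 1 - (gamma%:C)%C != 0.
  by rewrite -(rmorph1 (@real_complex R)) -rmorphB fmorph_eq0 subr_eq0 gt_eqF.
have aE k : alpha k = (gamma%:C)%C / (1 + k%:R * (gamma%:C)%C).
  by rewrite denE -fmorph_div.
have G_real : ((gamma%:C)%C)^* = (gamma%:C)%C by apply: conj_Creal; rewrite complex_real.
exact: (mu_geom G_real den_neq0 G_neq1 aE c0 Phi_orth).
Qed.
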